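(* Let $P$ be a right-LCM monoid and let $P_1$ be a submonoid of $P$ such that the inclusion $P_1\subseteq P$ is closed under factorization and preserves orthogonality. Then $P_1$ respects the LCM of $P$, i.e. for all $x,y\in P_1$, $xP\cap yP=(xP_1\cap yP_1)P$.
   Context: A monoid $P$ is right-LCM if it is left-cancellative and for all $p,q\in P$ either $pP\cap qP=\emptyset$ or $pP\cap qP=rP$ for some $r\in P$. A submonoid $P_1\subseteq P$ is closed under factorization in $P$ if whenever $x,y\in P$ satisfy $xy\in P_1$, then $x,y\in P_1$ (such a $P_1$ is itself right-LCM). For a right-LCM submonoid $P_1$ of $P$, the inclusion preserves orthogonality if for all $x,y\in P_1$: $xP_1\cap yP_1=\emptyset$ if and only if $xP\cap yP=\emptyset$. *)

Record is_monoid {M : Type} (mul : M -> M -> M) (e : M) : Prop := {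
  mon_assoc : forall x y z, mul x (mul y z) = mul (mul x y) z;
  mon_unit_l : forall x, mul e x = x;
  mon_unit_r : forall x, mul x e = x }.

Definition left_cancellative {M : Type} (mul : M -> M -> M) : Prop :=
  forall p x y, mul p x = mul p y -> x = y.

Definition rideal {M : Type} (mul : M -> M -> M) (S : M -> Prop) (x : M) : M -> Prop :=
  fun z => exists s, S s /\ z = mul x s.

Definition set_mul {M : Type} (mul : M -> M -> M) (A S : M -> Prop) : M -> Prop :=
  fun z => exists a s, A a /\ S s /\ z = mul a s.

Definition set_inter {M : Type} (A B : M -> Prop) : M -> Prop := fun z => A z /\ B z.

Definition set_empty {M : Type} (A : M -> Prop) : Prop := forall z, ~ A z.

Definition set_eq {M : Type} (A B : M -> Prop) : Prop := forall z, A z <-> B z.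

Definition full {M : Type} : M -> Prop := fun _ => True.

(* Right-LCM for the monoid (S, mul, e) where S is a submonoid of M
   (take S := full for the whole monoid). *)
Definition right_LCM {M : Type} (mul : M -> M -> M) (S : M -> Prop) : Prop :=
  (forall p x y, S p -> S x -> S y -> mul p x = mul p y -> x = y) /\
  (forall p q, S p -> S q ->
     set_empty (set_inter (rideal mul S p) (rideal mul S q)) \/
     exists r, S r /\ set_eq (set_inter (rideal mul S p) (rideal mul S q)) (rideal mul S r)).

Definition is_submonoid {M : Type} (mul : M -> M -> M) (e : M) (S : M -> Prop) : Prop :=
  S e /\ forall x y, S x -> S y -> S (mul x y).

Definition closed_under_factorization {M : Type} (mul : M -> M -> M) (S : M -> Prop) : Prop :=
  forall x y, S (mul x y) -> S x /\ S y.

Definition preserves_orthogonality {M : Type} (mul : M -> M -> M) (S : M -> Prop) : Prop :=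
  forall x y, S x -> S y ->
    (set_empty (set_inter (rideal mul S x) (rideal mul S y)) <->
     set_empty (set_inter (rideal mul full x) (rideal mul full y))).

From Stdlib Require Import Classical.

(* Take z in xP ∩ yP = tP.  Orthogonality preservation gives some r = x p = y q
   with p, q in P1, and r lies in tP, say r = t u.  Writing t = x a = y b and
   cancelling x (resp. y) yields p = a u and q = b u, so a, b lie in P1 by closure
   under factorization.  Hence t lies in xP1 ∩ yP1, and z ∈ tP is in (xP1 ∩ yP1)P. *)

Lemma right_LCM_full_left_cancellative {M : Type} (mul : M -> M -> M) :
  right_LCM mul full -> left_cancellative mul.
Proof.
  intros [Hcan _] p x y Hpxy. exact (Hcan p x y I I I Hpxy).
Qed.

Lemma nonempty_of_not_set_empty {M : Type} (A : M -> Prop) :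
  ~ set_empty A -> exists z, A z.
Proof.
  intros HA. apply not_all_not_ex. exact HA.
Qed.

Section RespectsLCM.

Variables (M : Type) (mul : M -> M -> M) (e : M).
Hypothesis monoid_mul : is_monoid mul e.

Lemma rideal_full_refl (t : M) : rideal mul full t t.
Proof.
  exists e. split; [exact I | symmetry; apply (mon_unit_r _ _ monoid_mul)].
Qed.

Lemma set_mul_rideal_full (S : M -> Prop) (x z : M) :
  set_mul mul (rideal mul S x) full z -> rideal mul full x z.
Proof.
  intros [a [s [[p [_ ->]] [_ ->]]]].
  exists (mul p s). split; [exact I | symmetry; apply (mon_assoc _ _ monoid_mul)].
Qed.

Hypothesis cancel_mul : left_cancellative mul.

Variable P1 : M -> Prop.
Hypothesis P1_factor_closed : closed_under_factorization mul P1.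

Lemma cofactor_in_sub (x a u p : M) :
  P1 p -> mul x p = mul (mul x a) u -> P1 a.
Proof.
  intros Hp Hxp.
  assert (Hpau : p = mul a u).
  { apply (cancel_mul x). rewrite (mon_assoc _ _ monoid_mul). exact Hxp. }
  rewrite Hpau in Hp. exact (proj1 (P1_factor_closed _ _ Hp)).
Qed.

Lemma rideal_full_generator_in_sub (x y t : M) :
  set_eq (set_inter (rideal mul full x) (rideal mul full y)) (rideal mul full t) ->
  (exists r, set_inter (rideal mul P1 x) (rideal mul P1 y) r) ->
  set_inter (rideal mul P1 x) (rideal mul P1 y) t.
Proof.
  intros Ht [r [[p [Hp Hrp]] [q [Hq Hrq]]]].
  assert (Hr : rideal mul full t r).
  { apply Ht. split; [exists p | exists q]; split; auto; exact I. }
  destruct Hr as [u [_ Hru]].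
  destruct (proj2 (Ht t) (rideal_full_refl t)) as [[a [_ Ha]] [b [_ Hb]]].
  split.
  - exists a. split; [| exact Ha].
    apply (cofactor_in_sub x a u p Hp). rewrite <- Ha, <- Hrp. exact Hru.
  - exists b. split; [| exact Hb].
    apply (cofactor_in_sub y b u q Hq). rewrite <- Hb, <- Hrq. exact Hru.
Qed.

End RespectsLCM.

Theorem mainTheorem3 (M : Type) (mul : M -> M -> M) (e : M) (P1 : M -> Prop) :
  is_monoid mul e ->
  right_LCM mul full ->
  is_submonoid mul e P1 ->
  closed_under_factorization mul P1 ->
  right_LCM mul P1 ->
  preserves_orthogonality mul P1 ->
  forall x y, P1 x -> P1 y ->
    set_eq (set_inter (rideal mul full x) (rideal mul full y))
           (set_mul mul (set_inter (rideal mul P1 x) (rideal mul P1 y)) full).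
Proof.
  intros Hm HL _ Hfac _ Hort x y Hx Hy z. split.
  - intros Hz.
    destruct (proj2 HL x y I I) as [Hemp | [t [_ Ht]]].
    + exfalso. exact (Hemp z Hz).
    + assert (HP1 : exists r, set_inter (rideal mul P1 x) (rideal mul P1 y) r).
      { apply nonempty_of_not_set_empty. intros Hemp.
        exact (proj1 (Hort x y Hx Hy) Hemp z Hz). }
      destruct (proj1 (Ht z) Hz) as [w [_ Hw]].
      exists t, w. split; [| split; [exact I | exact Hw]].
      exact (rideal_full_generator_in_sub M mul e Hm
               (right_LCM_full_left_cancellative mul HL) P1 Hfac x y t Ht HP1).
  - intros [a [s [[Hax Hay] [_ Hz]]]].
    split; apply (set_mul_rideal_full M mul e Hm P1);
      exists a, s; repeat split; assumption.
Qed.
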